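(* Consider a network as described in the context with $\Delta_{ij}>0$ for all $i\ne j$, and let $r=1+\big\lfloor \max_i\theta_i/\min_{i\ne j}\Delta_{ij}\big\rfloor$. If at some spiking instant $t_n$ at least $r$ cells spike (i.e. $\#I(t_n)\ge r$), then all cells spike at $t_n$, i.e. $I(t_n)=\{1,\dots,m\}$.
   Context: Network model. Fix an integer $m\ge 2$ (the number of units, or cells). For each $i\in\{1,\dots,m\}$ the following data are given. - $X_i$ is a compact finite-dimensional smooth manifold. - $f_i$ is a continuous vector field on $X_i$. - $S_i:X_i\to\mathbb R$ is a $C^1$ function, called the satisfaction level. - $\theta_i>0$ is a constant, called the goal. These are required to satisfy: there is $v_i>0$ with $\nabla S_i(x)\cdot f_i(x)>v_i$ for every $x\in X_i$ with $S_i(x)<\theta_i$. Real interaction weights $\Delta_{ij}$ are given for $i\ne j$. The global state $\mathbf x(t)=(x_1(t),\dots,x_m(t))\in\prod_i X_i$, $t\ge 0$, evolves as follows. Spiking instants $0\le t_0<t_1<\cdots$ are the instants at which at least one cell spikes. Between consecutive spiking instants each $x_i$ evolves independently by $dx_i/dt=f_i(x_i)$. At an instant $t_n$, write $S_j(x_j(t_n^-))=\lim_{t\to t_n^-}S_j(x_j(t))$. The coalition is $I(t_n)=\bigcup_{p\ge 0}I_p(t_n)$, where: - $I_0(t_n)$ is the set of cells $i$ with $S_i(x_i(t_n^-))\ge\theta_i$; - for $p\ge1$, $I_p(t_n)$ is the set of cells $j\notin\bigcup_{k<p}I_k(t_n)$ with $S_j(x_j(t_n^-))+\sum_{k<p}\sum_{i\in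 I_k(t_n)}\Delta_{ij}\ge\theta_j$. The spiking instants are exactly the instants with $I_0(t_n)\neq\emptyset$, and the cells in $I(t_n)$ are said to spike at $t_n$. At $t_n$ the state jumps as follows: - for $j\in I(t_n)$, $x_j(t_n)$ is a point with $S_j(x_j(t_n))=0$; - for $j\notin I(t_n)$, $x_j(t_n)$ is a point with $S_j(x_j(t_n))=S_j(x_j(t_n^-))+\sum_{i\in I(t_n),\,i\ne j}\Delta_{ij}$. Initial states are assumed to satisfy $S_i(x_i(0))\in[0,\theta_i)$ for all $i$. The network is cooperative if $\Delta_{ij}\ge 0$ for all $i\ne j$. A cooperative network is large enough if $\sqrt m\ge 1+\frac{\max_i\theta_i}{\min_{i\ne j}\Delta_{ij}}$; in particular this requires $\Delta_{ij}>0$ for all $i\ne j$. The grand coalition is exhibited at $t_n$ if $I(t_n)=\{1,\dots,m\}$. *)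

From Stdlib Require Import Reals Lra List ClassicalEpsilon ZArith Bool.
Open Scope bool_scope.
Open Scope R_scope.

(* Cells are indexed by 0, ..., m-1 (the paper's 1..m).  Satisfaction levels
   of cell i along the trajectory are abstracted as sigma i : R -> R, i.e.
   sigma i t = S_i(x_i(t)). *)

Definition Rleb (x y : R) : bool := if Rle_dec x y then true else false.

Definition sum_over (m : nat) (P : nat -> bool) (g : nat -> R) : R :=
  fold_right Rplus 0 (map g (filter P (seq 0 m))).

(* Given the set C = I_0 u ... u I_{p-1} of cells already in the coalition,
   the cells of the next level I_p (pre-spike satisfaction values s). *)
Definition next_level (m : nat) (theta : nat -> R) (Delta : nat -> nat -> R)
  (s : nat -> R) (C : nat -> bool) (j : nat) : bool :=
  Nat.ltb j m && negb (C j) &&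
  Rleb (theta j) (s j + sum_over m C (fun i => Delta i j)).

Fixpoint cum (m : nat) (theta : nat -> R) (Delta : nat -> nat -> R)
  (s : nat -> R) (p : nat) : nat -> bool :=
  match p with
  | O => fun _ => false
  | S p' => fun j => cum m theta Delta s p' j ||
                     next_level m theta Delta s (cum m theta Delta s p') j
  end.

Definition level (m : nat) (theta : nat -> R) (Delta : nat -> nat -> R)
  (s : nat -> R) (p : nat) : nat -> bool :=
  next_level m theta Delta s (cum m theta Delta s p).

Definition in_coalition (m : nat) (theta : nat -> R) (Delta : nat -> nat -> R)
  (s : nat -> R) (j : nat) : Prop :=
  exists p, level m theta Delta s p j = true.

Definition in_coalitionb (m : nat) (theta : nat -> R) (Delta : nat -> nat -> R)
  (s : nat -> R) (j : nat) : bool :=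
  if excluded_middle_informative (in_coalition m theta Delta s j)
  then true else false.

Definition start (t : nat -> R) (k : nat) : R :=
  match k with O => 0 | S k' => t k' end.

(* A run of the network up to (and including) the spiking instant t_n.
   t 0 < ... < t n are the first n+1 spiking instants, sigma i is the
   satisfaction level S_i(x_i(.)) of cell i, pre k i = S_i(x_i(t_k^-)). *)
Definition network_run (m : nat) (theta v : nat -> R) (Delta : nat -> nat -> R)
  (sigma : nat -> R -> R) (t : nat -> R) (pre : nat -> nat -> R) (n : nat)
  : Prop :=
  0 < t O /\
  (forall k, (k < n)%nat -> t k < t (S k)) /\
  (forall i, (i < m)%nat -> 0 <= sigma i 0 < theta i) /\
  (forall k i, (k <= n)%nat -> (i < m)%nat ->
     (* between spikes: no spiking instant, and the flow dx_i/dt = f_i(x_i)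
        gives d/dt S_i(x_i) = grad S_i . f_i > v_i while S_i < theta_i *)
     (forall tau, start t k < tau < t k ->
        sigma i tau < theta i /\
        exists d, derivable_pt_lim (sigma i) tau d /\
                  (sigma i tau < theta i -> v i < d)) /\
     (* the flow starts at the post-jump state at start t k *)
     limit1_in (sigma i) (fun tau => start t k < tau < t k)
               (sigma i (start t k)) (start t k) /\
     limit1_in (sigma i) (fun tau => start t k < tau < t k)
               (pre k i) (t k) /\
     (in_coalition m theta Delta (pre k) i -> sigma i (t k) = 0) /\
     (~ in_coalition m theta Delta (pre k) i ->
        sigma i (t k) = pre k i +
          sum_over m (fun j => in_coalitionb m theta Delta (pre k) j
                               && negb (Nat.eqb j i))
                   (fun j => Delta j i))) /\
  (* t_k is a spiking instant: I_0(t_k) is nonempty *)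
  (forall k, (k <= n)%nat -> exists i, (i < m)%nat /\ theta i <= pre k i).

From Coquelicot Require Import Coquelicot.
From Stdlib Require Import Reals List ZArith Lra Lia Classical Bool.
Open Scope R_scope.

(* Let C be the set of cells spiking at t_n and suppose a cell j
   does not spike.  Then j never enters the coalition, so its pre-spike level
   plus the input it receives from the cells of C stays below its goal:
       S_j(t_n^-) + sum_{i in C} Delta_ij < theta_j <= max theta.
   Every term of the sum is at least mu = min Delta, and there are at least
   r = 1 + floor(max theta / mu) of them, so the sum exceeds max theta.  Hence
   S_j(t_n^-) < 0, which is impossible: satisfaction levels never become
   negative, because between spikes they increase (positive derivative) and
   jumps either reset them to 0 or add non-negative interactions. *)

Lemma strictly_increasing_of_pos_derivative (f : R -> R) (a b : R) :
  (forall x, a < x < b -> exists d, derivable_pt_lim f x d /\ 0 < d) ->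
  forall x y, a < x -> x < y -> y < b -> f x < f y.
Proof.
  intros Hder x y ax xy yb.
  apply (incr_function f (Finite a) (Finite b) (fun z => Derive f z)); simpl; auto.
  - intros z h1 h2. destruct (Hder z (conj h1 h2)) as [d [hd _]].
    apply is_derive_Reals in hd. rewrite (is_derive_unique _ _ _ hd). exact hd.
  - intros z h1 h2. destruct (Hder z (conj h1 h2)) as [d [hd hpos]].
    apply is_derive_Reals in hd. rewrite (is_derive_unique _ _ _ hd). lra.
Qed.

Lemma limit1_in_le_of_frequently (f : R -> R) (D : R -> Prop) (L x0 c : R) :
  limit1_in f D L x0 ->
  (forall delta, 0 < delta -> exists y, D y /\ R_dist y x0 < delta /\ f y <= c) ->
  L <= c.
Proof.
  intros Hlim Hfreq. apply Rnot_lt_le. intro hcL.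
  destruct (Hlim (L - c)) as [delta [hdelta Hclose]]; [lra|].
  destruct (Hfreq delta hdelta) as [y [hy [hdist hfy]]].
  specialize (Hclose y (conj hy hdist)). simpl in Hclose. unfold R_dist in Hclose.
  apply Rabs_def2 in Hclose. lra.
Qed.

Lemma limit1_in_ge_of_frequently (f : R -> R) (D : R -> Prop) (L x0 c : R) :
  limit1_in f D L x0 ->
  (forall delta, 0 < delta -> exists y, D y /\ R_dist y x0 < delta /\ c <= f y) ->
  c <= L.
Proof.
  intros Hlim Hfreq.
  enough (- L <= - c) by lra.
  apply (limit1_in_le_of_frequently (fun x => - f x) D (- L) x0 (- c)).
  - exact (limit_Ropp f D L x0 Hlim).
  - intros delta hdelta. destruct (Hfreq delta hdelta) as [y [hy [hd hc]]].
    exists y. repeat split; auto. lra.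
Qed.

Lemma start_value_le_left_limit (f : R -> R) (a b L : R) :
  a < b ->
  (forall x y, a < x -> x < y -> y < b -> f x < f y) ->
  limit1_in f (fun tau => a < tau < b) (f a) a ->
  limit1_in f (fun tau => a < tau < b) L b ->
  f a <= L.
Proof.
  intros hab Hincr Hstart Hend.
  set (x := (a + b) / 2).
  assert (hx : a < x < b) by (unfold x; lra).
  apply Rle_trans with (f x).
  - apply (limit1_in_le_of_frequently f _ (f a) a (f x) Hstart).
    intros delta hdelta.
    set (y := a + Rmin delta (x - a) / 2).
    assert (hpos : 0 < Rmin delta (x - a)) by (apply Rmin_pos; lra).
    assert (hle1 := Rmin_l delta (x - a)). assert (hle2 := Rmin_r delta (x - a)).
    exists y. unfold R_dist. rewrite Rabs_right by (unfold y; lra).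
    repeat split; unfold y; try lra.
    left. apply Hincr; unfold y; lra.
  - apply (limit1_in_ge_of_frequently f _ L b (f x) Hend).
    intros delta hdelta.
    set (y := b - Rmin delta (b - x) / 2).
    assert (hpos : 0 < Rmin delta (b - x)) by (apply Rmin_pos; lra).
    assert (hle1 := Rmin_l delta (b - x)). assert (hle2 := Rmin_r delta (b - x)).
    exists y. unfold R_dist. rewrite Rabs_left by (unfold y; lra).
    repeat split; unfold y; try lra.
    left. apply Hincr; unfold y; lra.
Qed.

Definition sum_list (g : nat -> R) (L : list nat) : R := fold_right Rplus 0 (map g L).

Lemma sum_list_nonneg (g : nat -> R) (L : list nat) :
  (forall x, In x L -> 0 <= g x) -> 0 <= sum_list g L.
Proof.
  unfold sum_list; induction L as [|a L IH]; simpl; intros Hg; [lra|].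
  assert (0 <= g a) by auto. assert (0 <= fold_right Rplus 0 (map g L)) by auto. lra.
Qed.

Lemma sum_list_remove_le (g : nat -> R) (a : nat) (L : list nat) :
  (forall x, In x L -> 0 <= g x) -> sum_list g (remove Nat.eq_dec a L) <= sum_list g L.
Proof.
  unfold sum_list; induction L as [|b L IH]; simpl; intros Hg; [lra|].
  assert (0 <= g b) by auto. specialize (IH (fun x h => Hg x (or_intror h))).
  destruct (Nat.eq_dec a b); simpl; lra.
Qed.

Lemma sum_list_remove_in (g : nat -> R) (a : nat) (L : list nat) :
  In a L -> (forall x, In x L -> 0 <= g x) ->
  g a + sum_list g (remove Nat.eq_dec a L) <= sum_list g L.
Proof.
  induction L as [|b L IH]; simpl; intros Ha Hg; [destruct Ha|].
  destruct (Nat.eq_dec a b) as [<-|hne].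
  - assert (h := sum_list_remove_le g a L (fun x h => Hg x (or_intror h))).
    unfold sum_list in *; simpl; lra.
  - destruct Ha as [->|Ha]; [congruence|].
    specialize (IH Ha (fun x h => Hg x (or_intror h))). unfold sum_list in *; simpl; lra.
Qed.

Lemma sum_list_incl (g : nat -> R) (l L : list nat) :
  NoDup l -> incl l L -> (forall x, In x L -> 0 <= g x) ->
  sum_list g l <= sum_list g L.
Proof.
  revert L; induction l as [|a l IH]; intros L Hnd Hincl Hg.
  - apply sum_list_nonneg; auto.
  - inversion Hnd as [|? ? ha Hnd']; subst.
    assert (haL : In a L) by (apply Hincl; left; auto).
    assert (Hrem := sum_list_remove_in g a L haL Hg).
    assert (IHl : sum_list g l <= sum_list g (remove Nat.eq_dec a L)).
    { apply IH; auto.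
      - intros x hx. apply in_in_remove; [intros ->; contradiction|]. apply Hincl; right; auto.
      - intros x hx. apply in_remove in hx. apply Hg; tauto. }
    unfold sum_list in *; simpl; lra.
Qed.

Lemma sum_list_ge_count (g : nat -> R) (l : list nat) (mu : R) :
  (forall x, In x l -> mu <= g x) -> INR (length l) * mu <= sum_list g l.
Proof.
  unfold sum_list; induction l as [|a l IH]; intros Hg; [simpl; lra|].
  assert (mu <= g a) by (apply Hg; left; reflexivity).
  assert (IHl := IH (fun x h => Hg x (or_intror h))).
  change (length (a :: l)) with (S (length l)). rewrite S_INR. simpl. lra.
Qed.

Lemma sum_over_ge_count (m : nat) (C : nat -> bool) (g : nat -> R) (l : list nat) (mu : R) :
  NoDup l ->
  (forall x, In x l -> (x < m)%nat /\ C x = true /\ mu <= g x) ->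
  (forall x, (x < m)%nat -> C x = true -> 0 <= g x) ->
  INR (length l) * mu <= sum_over m C g.
Proof.
  intros Hnd Hl Hnonneg.
  apply Rle_trans with (sum_list g l); [apply sum_list_ge_count; apply Hl|].
  apply (sum_list_incl g l (filter C (seq 0 m)) Hnd).
  - intros x hx. destruct (Hl x hx) as [hxm [hC _]].
    apply filter_In. split; [apply in_seq; lia | exact hC].
  - intros x hx. apply filter_In in hx. destruct hx as [hseq hC].
    apply in_seq in hseq. apply Hnonneg; [lia | exact hC].
Qed.

Lemma count_times_mu_exceeds (M mu : R) (N : nat) :
  0 < mu -> (1 + Int_part (M / mu) <= Z.of_nat N)%Z -> M < INR N * mu.
Proof.
  intros hmu hN.
  assert (hfloor := base_Int_part (M / mu)).
  assert (hz : IZR (1 + Int_part (M / mu)) <= INR N)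
    by (rewrite INR_IZR_INZ; apply IZR_le; exact hN).
  rewrite plus_IZR in hz.
  replace M with (M / mu * mu) by (field; lra).
  apply Rmult_lt_compat_r; lra.
Qed.

Lemma cum_in_coalition (m : nat) (theta : nat -> R) (Delta : nat -> nat -> R)
  (s : nat -> R) (p j : nat) :
  cum m theta Delta s p j = true -> in_coalition m theta Delta s j.
Proof.
  induction p as [|p IH]; simpl; [discriminate|].
  intros h. apply orb_true_iff in h. destruct h as [h|h]; [auto | exists p; exact h].
Qed.

Lemma cum_monotone (m : nat) (theta : nat -> R) (Delta : nat -> nat -> R)
  (s : nat -> R) (p q j : nat) :
  cum m theta Delta s p j = true -> cum m theta Delta s (q + p) j = true.
Proof. induction q as [|q IH]; simpl; auto. intros h. rewrite IH; auto. Qed.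

Lemma coalition_members_in_cum (m : nat) (theta : nat -> R) (Delta : nat -> nat -> R)
  (s : nat -> R) (l : list nat) :
  (forall x, In x l -> in_coalition m theta Delta s x) ->
  exists P, forall x, In x l -> cum m theta Delta s P x = true.
Proof.
  induction l as [|a l IH]; intros Hl; [exists O; intros x []|].
  destruct IH as [P HP]; [intros x hx; apply Hl; right; auto|].
  destruct (Hl a (or_introl eq_refl)) as [q hq].
  exists (S q + P)%nat. intros x [<-|hx].
  - replace (S q + P)%nat with (P + S q)%nat by lia. apply cum_monotone. simpl.
    unfold level in hq. rewrite hq. apply orb_true_r.
  - apply cum_monotone; auto.
Qed.

Lemma outside_coalition_below_goal (m : nat) (theta : nat -> R) (Delta : nat -> nat -> R)
  (s : nat -> R) (P j : nat) :
  (j < m)%nat -> ~ in_coalition m theta Delta s j ->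
  cum m theta Delta s P j = false /\
  s j + sum_over m (cum m theta Delta s P) (fun i => Delta i j) < theta j.
Proof.
  intros hj hout.
  assert (hcum : cum m theta Delta s P j = false).
  { destruct (cum m theta Delta s P j) eqn:e; [|reflexivity].
    exfalso. exact (hout (cum_in_coalition m theta Delta s P j e)). }
  split; [exact hcum|].
  destruct (next_level m theta Delta s (cum m theta Delta s P) j) eqn:hnext.
  - exfalso. apply hout. exists P. exact hnext.
  - unfold next_level in hnext. rewrite hcum, (proj2 (Nat.ltb_lt j m) hj) in hnext.
    simpl in hnext. unfold Rleb in hnext.
    destruct (Rle_dec _ _) as [_|hlt]; [discriminate | lra].
Qed.

Section NonNegativity.

Variables (m : nat) (theta v : nat -> R) (Delta : nat -> nat -> R)
  (sigma : nat -> R -> R) (t : nat -> R) (pre : nat -> nat -> R) (n : nat).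
Hypothesis Delta_pos : forall i j, (i < m)%nat -> (j < m)%nat -> i <> j -> 0 < Delta i j.
Hypothesis v_pos : forall i, (i < m)%nat -> 0 < v i.
Hypothesis run : network_run m theta v Delta sigma t pre n.

Lemma interval_nonempty (k : nat) : (k <= n)%nat -> start t k < t k.
Proof.
  destruct run as [ht0 [hincr _]]. intros hk.
  destruct k; simpl; [exact ht0 | apply hincr; lia].
Qed.

Lemma start_le_pre (k i : nat) :
  (k <= n)%nat -> (i < m)%nat -> sigma i (start t k) <= pre k i.
Proof.
  intros hk hi. destruct run as [_ [_ [_ [hflow _]]]].
  destruct (hflow k i hk hi) as [hinside [hlim_start [hlim_pre _]]].
  apply (start_value_le_left_limit (sigma i) (start t k) (t k)); auto.
  - apply interval_nonempty; exact hk.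
  - apply strictly_increasing_of_pos_derivative. intros x hx.
    destruct (hinside x hx) as [hbelow [d [hd hspeed]]].
    exists d. split; [exact hd|]. specialize (v_pos i hi). specialize (hspeed hbelow). lra.
Qed.

Lemma post_jump_nonneg (k i : nat) :
  (k <= n)%nat -> (i < m)%nat -> 0 <= pre k i -> 0 <= sigma i (t k).
Proof.
  intros hk hi hpre. destruct run as [_ [_ [_ [hflow _]]]].
  destruct (hflow k i hk hi) as [_ [_ [_ [hreset hadd]]]].
  destruct (classic (in_coalition m theta Delta (pre k) i)) as [hin|hout].
  - rewrite hreset by exact hin. lra.
  - rewrite hadd by exact hout.
    enough (0 <= sum_over m (fun j => in_coalitionb m theta Delta (pre k) j
                                       && negb (Nat.eqb j i)) (fun j => Delta j i)) by lra.
    apply sum_list_nonneg. intros x hx. apply filter_In in hx. destruct hx as [hseq hsel].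
    apply in_seq in hseq. apply andb_true_iff in hsel. destruct hsel as [_ hneq].
    apply negb_true_iff, Nat.eqb_neq in hneq. left. apply Delta_pos; lia.
Qed.

Lemma pre_nonneg (k i : nat) : (k <= n)%nat -> (i < m)%nat -> 0 <= pre k i.
Proof.
  intros hk hi. apply Rle_trans with (sigma i (start t k)); [|apply start_le_pre; auto].
  revert hk. induction k as [|k IH]; intros hk; simpl.
  - destruct run as [_ [_ [hinit _]]]. destruct (hinit i hi); lra.
  - apply post_jump_nonneg; [lia | exact hi |].
    apply Rle_trans with (sigma i (start t k)); [apply IH; lia | apply start_le_pre; auto; lia].
Qed.

End NonNegativity.

Theorem mainTheorem5
  (m : nat) (theta v : nat -> R) (Delta : nat -> nat -> R)
  (sigma : nat -> R -> R) (t : nat -> R) (pre : nat -> nat -> R) (n : nat)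
  (Mth mu : R) :
  (2 <= m)%nat ->
  (forall i, (i < m)%nat -> 0 < theta i) ->
  (forall i, (i < m)%nat -> 0 < v i) ->
  (forall i j, (i < m)%nat -> (j < m)%nat -> i <> j -> 0 < Delta i j) ->
  (* Mth = max_i theta_i *)
  (forall i, (i < m)%nat -> theta i <= Mth) ->
  (exists i, (i < m)%nat /\ theta i = Mth) ->
  (* mu = min_{i <> j} Delta_ij *)
  (forall i j, (i < m)%nat -> (j < m)%nat -> i <> j -> mu <= Delta i j) ->
  (exists i j, (i < m)%nat /\ (j < m)%nat /\ i <> j /\ Delta i j = mu) ->
  network_run m theta v Delta sigma t pre n ->
  (* #I(t_n) >= r = 1 + floor(Mth / mu) *)
  (exists l : list nat, NoDup l /\
     (forall j, In j l -> (j < m)%nat /\ in_coalition m theta Delta (pre n) j) /\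
     (1 + Int_part (Mth / mu) <= Z.of_nat (length l))%Z) ->
  forall j, (j < m)%nat -> in_coalition m theta Delta (pre n) j.
Proof.
  intros _ _ hv hD hMth _ hmu [a [b [ha [hb [hab hmu_attained]]]]] hrun
         [l [hnd [hl hlen]]] j hj.
  assert (mu_pos : 0 < mu) by (rewrite <- hmu_attained; apply hD; auto).
  apply NNPP; intro hout.
  destruct (coalition_members_in_cum m theta Delta (pre n) l (fun x h => proj2 (hl x h)))
    as [P HP].
  destruct (outside_coalition_below_goal m theta Delta (pre n) P j hj hout)
    as [hj_notin hbelow].
  assert (hinput : INR (length l) * mu
                   <= sum_over m (cum m theta Delta (pre n) P) (fun i => Delta i j)).
  { apply sum_over_ge_count; auto.
    - intros x hx. destruct (hl x hx) as [hxm hxin].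
      repeat split; auto. apply hmu; auto. intros ->. exact (hout hxin).
    - intros x hxm hx. left. apply hD; auto. intros ->. congruence. }
  assert (hexceed := count_times_mu_exceeds Mth mu (length l) mu_pos hlen).
  assert (hpre := pre_nonneg m theta v Delta sigma t pre n hD hv hrun n j (le_n n) hj).
  specialize (hMth j hj). lra.
Qed.
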